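(* Let $E$ be a Hausdorff locally convex topological vector space, $\Omega$ an open subset of $E$, and $(Y,\|\cdot\|)$ a normed space. Let $g:\Omega\to Y$ be Gateaux differentiable and continuous at $\hat{x}\in\Omega$. Let $C$ be a family of functions from $Y$ into $\mathbb{R}$ which is $r$-equi-Lipschitz at $g(\hat{x})$ for some $r\ge0$ and equi-Gateaux differentiable at $g(\hat{x})$. Then (i) $\overline{\operatorname{conv}}^{w^*}\{d_G\phi(g(\hat{x})):\phi\in C\}$ is a $w^*$-compact subset of $Y^*$; (ii) the family $\{\phi\circ g:\phi\in C\}$ is equi-Gateaux differentiable at $\hat{x}$ and $d_G(\phi\circ g)(\hat{x})=d_G\phi(g(\hat{x}))\circ d_G g(\hat{x})$ for all $\phi\in C$.
   Context: A map $g$ into a normed space is Gateaux differentiable at $x$ if there is a continuous linear map $d_Gg(x)$ with $\lim_{t\searrow 0}\|(g(x+tv)-g(x)-t\,d_Gg(x)(v))/t\|=0$ for every $v$. A family $C$ of real functions is equi-Gateaux differentiable at $y$ if each $\phi\in C$ is Gateaux differentiable at $y$ and for every direction $v$, $\lim_{t\searrow0}\sup_{\phi\in C}|(\phi(y+tv)-\phi(y)-t\langle d_G\phi(y),v\rangle)/t|=0$. $C$ is $r$-equi-Lipschitz at $y$ if there is a ball centered at $y$ on which every $\phi\in C$ is $r$-Lipschitz. $\overline{\operatorname{conv}}^{w^*}$ denotes weak-star closed convex hull in $Y^*$. *)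

From HB Require Import structures.
From mathcomp Require Import all_boot all_order all_algebra.
From mathcomp Require Import all_classical all_reals all_analysis.
Set Implicit Arguments. Unset Strict Implicit. Unset Printing Implicit Defensive.
Import Order.TTheory GRing.Theory Num.Theory.
Import numFieldNormedType.Exports.
Local Open Scope classical_set_scope.
Local Open Scope ring_scope.

Definition cont_linear (R : realType) (X Z : tvsType R) (L : X -> Z) : Prop :=
  linear L /\ continuous L.

Definition is_gateaux_deriv (R : realType) (X : tvsType R) (Z : normedModType R)
  (g : X -> Z) (x : X) (L : X -> Z) : Prop :=
  cont_linear L /\
  forall v : X,
    (fun t : R => `| t^-1 *: (g (x + t *: v) - g x - t *: L v) |) @ 0^'+ --> 0.

Definition equi_gateaux (R : realType) (X : tvsType R) (I : Type) (P : set I)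
  (F : I -> X -> R^o) (x : X) (D : I -> X -> R^o) : Prop :=
  (forall i, P i -> is_gateaux_deriv (F i) x (D i)) /\
  forall v : X, forall e : R, 0 < e ->
    \forall t \near 0^'+, forall i, P i ->
      `| (F i (x + t *: v) - F i x - t * D i v) / t | <= e.

Definition equi_lipschitz (R : realType) (Y : normedModType R)
  (C : set (Y -> R^o)) (r : R) (y : Y) : Prop :=
  exists2 d : R, 0 < d &
    forall phi, C phi -> forall a b, ball y d a -> ball y d b ->
      `| phi a - phi b | <= r * `| a - b |.

(* The topological topdual Y^*, as a subset of the function space Y -> R, which
   carries the topology of pointwise convergence; the weak-star topology on
   Y^* is the subspace topology induced by {ptws Y -> R}. *)
Definition topdual (R : realType) (Y : normedModType R) : set {ptws Y -> R^o} :=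
  [set f | cont_linear (f : Y -> R^o)].
Arguments topdual {R} Y.

Definition convex_fun_set (R : realType) (Y : normedModType R)
  (A : set {ptws Y -> R^o}) : Prop :=
  forall f g, A f -> A g -> forall t : R, 0 <= t <= 1 ->
    A (fun y => t * f y + (1 - t) * g y).

(* A is weak-star closed in Y^* (relatively closed in the subspace topology) *)
Definition wstar_closed (R : realType) (Y : normedModType R)
  (A : set {ptws Y -> R^o}) : Prop :=
  A `<=` topdual Y /\ topdual Y `&` closure A `<=` A.

Definition wstar_clconv (R : realType) (Y : normedModType R)
  (S : set {ptws Y -> R^o}) : set {ptws Y -> R^o} :=
  \bigcap_(A in [set A | S `<=` A /\ convex_fun_set A /\ wstar_closed A]) A.

From HB Require Import structures.
From mathcomp Require Import all_boot all_order all_algebra.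
From mathcomp Require Import all_classical all_reals all_analysis.
From mathcomp Require Import ring lra.
Import Order.TTheory GRing.Theory Num.Theory.
Import numFieldNormedType.Exports.
Local Open Scope classical_set_scope.
Local Open Scope ring_scope.

(* For (ii), split the remainder of phi o g along t as
     [phi (g (x + t v)) - phi (g x + t Dg v)]
     + [phi (g x + t Dg v) - phi (g x) - t Dphi (Dg v)]:
   the first term is at most r |g (x + t v) - g x - t Dg v| = o(t) by the
   equi-Lipschitz bound, uniformly in phi, and the second is o(t) uniformly in
   phi by equi-Gateaux differentiability of C.
   For (i), the equi-Lipschitz bound gives |Dphi y| <= r |y|, so every
   derivative lies in the set K of linear functionals bounded by r |.|.  By
   Tychonoff K is compact for the pointwise (weak-star) topology, and it is
   closed, convex and made of continuous functionals; hence the weak-star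
   closed convex hull is a closed subset of K. *)

Lemma cvg_ray {R : realType} {V : normedModType R} (y u : V) :
  y + t *: u @[t --> 0^'+] --> y.
Proof.
rewrite -[in X in _ --> X](addr0 y) -(scale0r u).
apply: cvgD; first exact: cvg_cst.
by apply: cvgZr_tmp; exact: cvg_at_right_filter.
Qed.

Section Gateaux.
Context {R : realType} {X : tvsType R} {Z : normedModType R}.
Context {g : X -> Z} {x : X} {L : X -> Z}.
Hypothesis gL : is_gateaux_deriv g x L.

Lemma gateaux_remainder_le v (e : R) : 0 < e ->
  \forall t \near 0^'+, `|g (x + t *: v) - g x - t *: L v| <= e * t.
Proof.
move=> e0; have /cvgrPdist_le/(_ e e0) := gL.2 v.
apply: filter_app; near=> t => /=.
have t0 : 0 < t by near: t; exact: nbhs_right_gt.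
rewrite sub0r normrN normr_id normrZ gtr0_norm ?invr_gt0 //.
by rewrite mulrC ler_pdivrMr.
Unshelve. all: by end_near. Qed.

Lemma gateaux_quotient_cvg v :
  t^-1 *: (g (x + t *: v) - g x) @[t --> 0^'+] --> L v.
Proof.
apply/cvgrPdist_le => e e0; have /cvgrPdist_le/(_ e e0) := gL.2 v.
apply: filter_app; near=> t => /=.
have t0 : 0 < t by near: t; exact: nbhs_right_gt.
by rewrite sub0r normrN normr_id scalerBr scalerA mulVf ?gt_eqF // scale1r distrC.
Unshelve. all: by end_near. Qed.

Lemma gateaux_ray_cvg v : g (x + t *: v) @[t --> 0^'+] --> g x.
Proof.
have : g x + t *: (t^-1 *: (g (x + t *: v) - g x)) @[t --> 0^'+] --> g x + 0 *: L v.
  apply: cvgD; first exact: cvg_cst.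
  by apply: cvgZ; [exact: cvg_at_right_filter | exact: gateaux_quotient_cvg].
rewrite scale0r addr0; apply: cvg_trans; apply: near_eq_cvg; near=> t.
have t0 : 0 < t by near: t; exact: nbhs_right_gt.
by rewrite scalerA mulfV ?gt_eqF // scale1r addrC subrK.
Unshelve. all: by end_near. Qed.

End Gateaux.

Lemma lipschitz_gateaux_deriv_le {R : realType} {Y : normedModType R}
    (phi : Y -> R^o) (y0 : Y) (L : Y -> R^o) (r d : R) :
  0 < d ->
  (forall a b, ball y0 d a -> ball y0 d b -> `|phi a - phi b| <= r * `|a - b|) ->
  is_gateaux_deriv phi y0 L -> forall y, `|L y| <= r * `|y|.
Proof.
move=> d0 lip phiL y.
apply: (cvgr_to_le (cvg_norm (gateaux_quotient_cvg phiL y))).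
near=> t.
have t0 : 0 < t by near: t; exact: nbhs_right_gt.
have ball_t : ball y0 d (y0 + t *: y) by near: t; exact: (cvg_ball (cvg_ray _ _) d0).
rewrite normrZ gtr0_norm ?invr_gt0 // ler_pdivrMl //.
apply: le_trans (lip _ _ ball_t (ballxx _ d0)) _.
by rewrite addrAC subrr add0r normrZ gtr0_norm // mulrCA.
Unshelve. all: by end_near. Qed.

Lemma cont_linear_comp {R : realType} {X Y Z : tvsType R} (f : X -> Y) (h : Y -> Z) :
  cont_linear f -> cont_linear h -> cont_linear (h \o f).
Proof.
move=> [lin_f cont_f] [lin_h cont_h]; split.
  by move=> a u v /=; rewrite lin_f lin_h.
by move=> u; apply: continuous_comp; [exact: cont_f | exact: cont_h].
Qed.

Lemma cont_linear_equi_gateaux {R : realType} {X : tvsType R} {I : Type} (P : set I)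
    (F : I -> X -> R^o) (x : X) (D : I -> X -> R^o) :
  (forall i, P i -> cont_linear (D i)) ->
  (forall v e, 0 < e -> \forall t \near 0^'+, forall i, P i ->
     `|(F i (x + t *: v) - F i x - t * D i v) / t| <= e) ->
  equi_gateaux P F x D.
Proof.
move=> Dlin unif; split => // i Pi; split; first exact: Dlin.
move=> v; apply/cvgrPdist_le => e e0; apply: filterS (unif v e e0) => t /(_ i Pi).
by rewrite sub0r normrN normr_id /= mulrC.
Qed.

Section Composition.
Context {R : realType} {E : tvsType R} {Y : normedModType R}.
Context {g : E -> Y} {x : E} {Dg : E -> Y}.
Context {C : set (Y -> R^o)} {Dphi : (Y -> R^o) -> (Y -> R^o)} {r : R}.
Hypotheses (gDg : is_gateaux_deriv g x Dg) (r0 : 0 <= r).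
Hypotheses (Clip : equi_lipschitz C r (g x)) (Cgat : equi_gateaux C id (g x) Dphi).

Lemma comp_remainder_le v (e : R) : 0 < e ->
  \forall t \near 0^'+, forall phi, C phi ->
    `|(phi (g (x + t *: v)) - phi (g x) - t * Dphi phi (Dg v)) / t| <= e.
Proof.
move=> e0; have [d d0 lip] := Clip; have [_ Cunif] := Cgat.
set u := Dg v; pose e' := e / (2 * (r + 1)).
have r1 : 0 < r + 1 by rewrite ltr_wpDl.
have e'0 : 0 < e' by rewrite /e' divr_gt0 // mulr_gt0.
have re' : r * e' <= e / 2.
  have : e' * (2 * (r + 1)) = e by rewrite divfK // gt_eqF // mulr_gt0.
  by move: e'0; nra.
have e2 : 0 < e / 2 by rewrite divr_gt0.
near=> t.
have t0 : 0 < t by near: t; exact: nbhs_right_gt.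
have ball_a : ball (g x) d (g (x + t *: v)).
  by near: t; exact: (cvg_ball (gateaux_ray_cvg gDg v) d0).
have ball_b : ball (g x) d (g x + t *: u).
  by near: t; exact: (cvg_ball (cvg_ray _ _) d0).
have rem_ab : `|g (x + t *: v) - (g x + t *: u)| <= e' * t.
  by rewrite opprD addrA; near: t; exact: (gateaux_remainder_le gDg v _ e'0).
have rem_C : forall phi, C phi ->
    `|(phi (g x + t *: u) - phi (g x) - t * Dphi phi u) / t| <= e / 2.
  by near: t; exact: Cunif u _ e2.
move=> phi Cphi; have rem_phi := rem_C phi Cphi.
set a := g (x + t *: v) in ball_a rem_ab *.
set b := g x + t *: u in ball_b rem_ab rem_phi.
rewrite -[phi a](subrK (phi b)) -!addrA addrA mulrDl (le_trans (ler_normD _ _)) //.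
rewrite [e]splitr lerD //; last by rewrite addrA.
rewrite normrM normfV (gtr0_norm t0) ler_pdivrMr //.
apply: le_trans (lip _ Cphi _ _ ball_a ball_b) _.
by apply: le_trans (ler_wpM2l r0 rem_ab) _; rewrite mulrA ler_wpM2r // ltW.
Unshelve. all: by end_near. Qed.

Lemma equi_gateaux_comp :
  equi_gateaux C (fun phi => phi \o g) x (fun phi => Dphi phi \o Dg).
Proof.
apply: cont_linear_equi_gateaux; last exact: comp_remainder_le.
by move=> phi Cphi; apply: cont_linear_comp; [exact: gDg.1 | exact: (Cgat.1 _ Cphi).1].
Qed.

End Composition.

Section ClosedSets.
Context {R : realType} {T : topologicalType}.

Lemma closed_affine_eq (p q s : T -> R) (a : R) :
  continuous p -> continuous q -> continuous s ->
  closed [set x | p x = a * q x + s x].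
Proof.
move=> cp cq cs.
have -> : [set x | p x = a * q x + s x] =
    (fun x => p x - (a * q x + s x)) @^-1` [set 0].
  apply/seteqP; split => x /=; first by move=> ->; rewrite subrr.
  by move/eqP; rewrite subr_eq0 => /eqP.
apply: preimage_closed; last exact: closed_eq.
move=> x _; apply: cvgB; first exact: cp.
apply: cvgD; last exact: cs.
by apply: cvgMr; exact: cq.
Qed.

Lemma closed_norm_le (p : T -> R) (c : R) :
  continuous p -> closed [set x | `|p x| <= c].
Proof.
move=> cp; apply: (@preimage_closed _ _ (fun x => `|p x|) [set y | y <= c]).
  by move=> x _; apply: continuous_comp; [exact: cp | exact: norm_continuous].
exact: closed_le.
Qed.
End ClosedSets.

Section DualBall.
Context {R : realType} {Y : normedModType R}.
Variable r : R.

Definition dual_ball : set {ptws Y -> R^o} :=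
  [set f | linear (f : Y -> R^o) /\ forall y, `|f y| <= r * `|y|].

Lemma continuous_ptws_eval (y : Y) : continuous (fun f : {ptws Y -> R^o} => f y : R).
Proof. exact: proj_continuous. Qed.

Lemma closed_dual_ball : closed dual_ball.
Proof.
have -> : dual_ball =
    \bigcap_(p in [set: R * Y * Y])
      [set f : {ptws Y -> R^o} | f (p.1.1 *: p.1.2 + p.2) = p.1.1 * f p.1.2 + f p.2]
    `&` \bigcap_(y in [set: Y]) [set f : {ptws Y -> R^o} | `|f y| <= r * `|y|].
  apply/seteqP; split=> f [lin bd]; split.
  - by move=> [[a u] v] _; exact: lin.
  - by move=> y _; exact: bd.
  - by move=> a u v; exact: (lin (a, u, v)).
  - by move=> y; exact: bd.
apply: closedI; apply: closed_bigI.
- by move=> [[a u] v] _; apply: closed_affine_eq; exact: continuous_ptws_eval.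
- by move=> y _; apply: closed_norm_le; exact: continuous_ptws_eval.
Qed.

Lemma compact_dual_ball : compact dual_ball.
Proof.
have box := @tychonoff Y (fun _ => R^o) (fun y => `[- (r * `|y|), r * `|y|]%classic)
  (fun y => @segment_compact R _ _).
apply: (subclosed_compact closed_dual_ball box) => f [_ bd] y /=.
by rewrite in_itv /= -ler_norml.
Qed.

Lemma dual_ball_topdual : dual_ball `<=` topdual Y.
Proof.
move=> f [lin bd]; split => //.
pose fL : {linear Y -> R^o} :=
  HB.pack (f : Y -> R^o) (GRing.isLinear.Build _ _ _ _ (f : Y -> R^o) lin).
apply: (@bounded_linear_continuous _ _ _ fL); apply/linear_boundedP.
near=> M => y; apply: le_trans (bd y) _; apply: ler_wpM2r; first exact: normr_ge0.
by near: M; apply: nbhs_pinfty_ge; rewrite num_real.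
Unshelve. all: by end_near. Qed.

Lemma convex_dual_ball : convex_fun_set dual_ball.
Proof.
move=> f h [lin_f bd_f] [lin_h bd_h] s /andP[s0 s1]; split.
  move=> a u v /=; rewrite lin_f lin_h /GRing.scale /=; ring.
move=> y; have s1' : 0 <= 1 - s by rewrite subr_ge0.
apply: (le_trans (ler_normD _ _)); rewrite !normrM (ger0_norm s0) (ger0_norm s1').
apply: le_trans (lerD (ler_wpM2l s0 (bd_f y)) (ler_wpM2l s1' (bd_h y))) _.
by rewrite -mulrDl addrC subrK mul1r.
Qed.
End DualBall.

Lemma equi_gateaux_derivs_dual_ball {R : realType} {Y : normedModType R}
    (C : set (Y -> R^o)) (Dphi : (Y -> R^o) -> (Y -> R^o)) (r : R) (y0 : Y) :
  equi_lipschitz C r y0 -> equi_gateaux C id y0 Dphi ->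
  [set (Dphi phi : {ptws Y -> R^o}) | phi in C] `<=` dual_ball r.
Proof.
move=> [d d0 lip] [Cder _] _ [phi Cphi <-]; have phiD := Cder phi Cphi.
split; first exact: phiD.1.1.
exact: lipschitz_gateaux_deriv_le d0 (lip phi Cphi) phiD.
Qed.

Section WstarHull.
Context {R : realType} {Y : normedModType R}.
Implicit Types S K : set {ptws Y -> R^o}.

Lemma wstar_clconv_sub S K :
  S `<=` K -> convex_fun_set K -> wstar_closed K -> wstar_clconv S `<=` K.
Proof. by move=> SK cK wK; apply: bigcap_inf. Qed.

Lemma closed_wstar_clconv {S K} :
  closed K -> K `<=` topdual Y -> wstar_clconv S `<=` K -> closed (wstar_clconv S).
Proof.
move=> clK Kdual WK f Wf A [SA [cA wA]]; apply: wA.2; split.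
  exact/Kdual/clK/(closureS WK).
by apply: (closureS _ Wf); exact: wstar_clconv_sub.
Qed.

Lemma compact_wstar_clconv S K :
  S `<=` K -> convex_fun_set K -> K `<=` topdual Y -> closed K -> compact K ->
  compact (wstar_clconv S).
Proof.
move=> SK cK Kdual clK compK.
have WK : wstar_clconv S `<=` K.
  by apply: wstar_clconv_sub => //; split=> // f [_]; exact: clK.
exact: subclosed_compact (closed_wstar_clconv clK Kdual WK) compK WK.
Qed.

End WstarHull.

Theorem lemma4p7 (R : realType) (E : tvsType R) (Y : normedModType R)
  (Omega : set E) (g : E -> Y) (xhat : E) (Dg : E -> Y)
  (C : set (Y -> R^o)) (Dphi : (Y -> R^o) -> (Y -> R^o)) (r : R) :
  hausdorff_space E ->
  open Omega -> Omega xhat ->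
  is_gateaux_deriv g xhat Dg ->
  {for xhat, continuous g} ->
  0 <= r ->
  equi_lipschitz C r (g xhat) ->
  equi_gateaux C id (g xhat) Dphi ->
  compact (wstar_clconv [set (Dphi phi : {ptws Y -> R^o}) | phi in C])
  /\ equi_gateaux C (fun phi => phi \o g) xhat (fun phi => Dphi phi \o Dg).
Proof.
move=> _ _ _ gDg _ r0 Clip Cgat; split; last exact: equi_gateaux_comp gDg r0 Clip Cgat.
apply: (compact_wstar_clconv _ (dual_ball r)).
- exact: equi_gateaux_derivs_dual_ball Clip Cgat.
- exact: convex_dual_ball.
- exact: dual_ball_topdual.
- exact: closed_dual_ball.
- exact: compact_dual_ball.
Qed.
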